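(* Let $X$ be a maximal space, $A\subseteq X$ and $x\in X$. If $x\in\overline{A}\setminus A$, then there is $B\subseteq A$ with no isolated points (in its subspace topology) such that $x\in\overline{B}$.
   Context: Spaces are countable $T_1$ topological spaces. A space is maximal if it is dense-in-itself (has no isolated points) and every strictly finer topology on it has an isolated point. *)

Definition is_topology {T : Type} (O : (T -> Prop) -> Prop) : Prop :=
  O (fun _ => True) /\
  O (fun _ => False) /\
  (forall U V, O U -> O V -> O (fun x => U x /\ V x)) /\
  (forall (F : (T -> Prop) -> Prop),
      (forall U, F U -> O U) -> O (fun x => exists U, F U /\ U x)).

Definition T1_top {T : Type} (O : (T -> Prop) -> Prop) : Prop :=
  forall x y : T, x <> y -> exists U, O U /\ U x /\ ~ U y.

Definition countable_type (T : Type) : Prop :=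
  exists f : T -> nat, forall x y, f x = f y -> x = y.

Definition isolated_point {T : Type} (O : (T -> Prop) -> Prop) (x : T) : Prop :=
  O (fun y => y = x).

Definition dense_in_itself {T : Type} (O : (T -> Prop) -> Prop) : Prop :=
  forall x : T, ~ isolated_point O x.

Definition strictly_finer {T : Type} (O' O : (T -> Prop) -> Prop) : Prop :=
  (forall U, O U -> O' U) /\ exists U, O' U /\ ~ O U.

Definition maximal_space {T : Type} (O : (T -> Prop) -> Prop) : Prop :=
  is_topology O /\ dense_in_itself O /\
  forall O', is_topology O' -> strictly_finer O' O -> exists x, isolated_point O' x.

Definition closure {T : Type} (O : (T -> Prop) -> Prop) (A : T -> Prop) (x : T) : Prop :=
  forall U, O U -> U x -> exists y, U y /\ A y.

Definition no_isolated_in_subspace {T : Type} (O : (T -> Prop) -> Prop) (B : T -> Prop) : Prop :=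
  forall b, B b -> forall U, O U -> U b -> exists c, B c /\ U c /\ c <> b.

(* A T1 maximal space is submaximal: a dense set D that is not open could be
   adjoined to the topology, and the resulting strictly finer topology has no
   isolated point, since an isolated point {p} = U ∪ (V ∩ D) would force
   U or V to be {p} (T1 separates other points of V from p, and D is dense).
   Now let B be the union of all crowded subsets of A.  Every nonempty open
   subset of A is crowded, hence meets B, so (X \ A) ∪ B is dense and thus
   open.  It contains x, and each of its neighbourhoods of x meets A, hence B. *)

From Stdlib Require Import Classical FunctionalExtensionality PropExtensionality.

Definition dense {T : Type} (O : (T -> Prop) -> Prop) (D : T -> Prop) : Prop :=
  forall U, O U -> forall u, U u -> exists y, U y /\ D y.

Definition adjoin_open {T : Type} (O : (T -> Prop) -> Prop) (D : T -> Prop)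
  (W : T -> Prop) : Prop :=
  exists U V, O U /\ O V /\ forall y, W y <-> U y \/ (V y /\ D y).

Definition crowded_kernel {T : Type} (O : (T -> Prop) -> Prop) (A : T -> Prop)
  (y : T) : Prop :=
  exists C, (forall z, C z -> A z) /\ no_isolated_in_subspace O C /\ C y.

Section Topology.

Variables (T : Type) (O : (T -> Prop) -> Prop).
Hypothesis HO : is_topology O.

Lemma open_ext (U V : T -> Prop) : O U -> (forall y, U y <-> V y) -> O V.
Proof.
  intros HU HUV. replace V with U; [exact HU|].
  apply functional_extensionality; intro y.
  apply propositional_extensionality, HUV.
Qed.

Lemma open_setT : O (fun _ => True).
Proof. apply HO. Qed.

Lemma open_set0 : O (fun _ => False).
Proof. apply HO. Qed.

Lemma open_setI (U V : T -> Prop) : O U -> O V -> O (fun y => U y /\ V y).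
Proof. apply HO. Qed.

Lemma open_setU (U V : T -> Prop) : O U -> O V -> O (fun y => U y \/ V y).
Proof.
  intros HU HV. destruct HO as (_ & _ & _ & Hunion).
  apply open_ext with (fun y => exists W, (W = U \/ W = V) /\ W y).
  - apply Hunion; intros W [-> | ->]; assumption.
  - intro y; split.
    + intros [W [[-> | ->] Wy]]; auto.
    + intros [Uy | Vy]; [exists U | exists V]; auto.
Qed.

Lemma isolated_of_open (U : T -> Prop) (p : T) :
  O U -> U p -> (forall y, U y -> y = p) -> isolated_point O p.
Proof.
  intros HU Up Hp. apply open_ext with U; [exact HU|].
  intro y; split; [apply Hp | intros ->; exact Up].
Qed.

Lemma open_no_isolated_in_subspace (U : T -> Prop) :
  dense_in_itself O -> O U -> no_isolated_in_subspace O U.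
Proof.
  intros Hcrowded HU b Ub V HV Vb. apply NNPP; intro Hnone.
  apply (Hcrowded b), isolated_of_open with (fun y => U y /\ V y).
  - apply open_setI; assumption.
  - split; assumption.
  - intros y [Uy Vy]. apply NNPP; intro Hyb. apply Hnone; exists y; auto.
Qed.

Section Adjoin.

Variable D : T -> Prop.

Lemma adjoin_open_topology : is_topology (adjoin_open O D).
Proof.
  split; [|split; [|split]].
  - exists (fun _ => True), (fun _ => False).
    split; [apply open_setT|split; [apply open_set0|tauto]].
  - exists (fun _ => False), (fun _ => False).
    split; [apply open_set0|split; [apply open_set0|tauto]].
  - intros W1 W2 [U1 [V1 [HU1 [HV1 HW1]]]] [U2 [V2 [HU2 [HV2 HW2]]]].
    exists (fun y => U1 y /\ U2 y),
      (fun y => (U1 y /\ V2 y) \/ (V1 y /\ U2 y) \/ (V1 y /\ V2 y)).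
    split; [apply open_setI; assumption|split].
    + repeat apply open_setU; apply open_setI; assumption.
    + intro y; rewrite HW1, HW2; tauto.
  - intros F HF. destruct HO as (_ & _ & _ & Hunion).
    exists (fun y => exists U, (O U /\ exists W V, F W /\ O V /\
               forall z, W z <-> U z \/ (V z /\ D z)) /\ U y),
      (fun y => exists V, (O V /\ exists W U, F W /\ O U /\
               forall z, W z <-> U z \/ (V z /\ D z)) /\ V y).
    split; [apply Hunion; intros U [HU _]; exact HU|].
    split; [apply Hunion; intros V [HV _]; exact HV|].
    intro y; split.
    + intros [W [FW Wy]]. destruct (HF W FW) as [U [V [HU [HV HW]]]].
      destruct (proj1 (HW y) Wy) as [Uy | [Vy Dy]].
      * left; exists U; split; [split; [exact HU | exists W, V; auto] | exact Uy].
      * right; split; [|exact Dy].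
        exists V; split; [split; [exact HV | exists W, U; auto] | exact Vy].
    + intros [[U [[_ [W [V [FW [_ HW]]]]] Uy]]
             | [[V [[_ [W [U [FW [_ HW]]]]] Vy]] Dy]];
        exists W; (split; [exact FW | apply HW; auto]).
Qed.

Lemma adjoin_open_strictly_finer : ~ O D -> strictly_finer (adjoin_open O D) O.
Proof.
  intro nD. split.
  - intros U HU. exists U, (fun _ => False).
    split; [exact HU | split; [apply open_set0 | tauto]].
  - exists D; split; [|exact nD].
    exists (fun _ => False), (fun _ => True).
    split; [apply open_set0 | split; [apply open_setT | tauto]].
Qed.

Lemma adjoin_open_dense_in_itself :
  T1_top O -> dense_in_itself O -> dense O D -> dense_in_itself (adjoin_open O D).
Proof.
  intros HT1 Hcrowded HD p [U [V [HU [HV Hp]]]].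
  destruct (proj1 (Hp p) eq_refl) as [Up | [Vp Dp]].
  - apply (Hcrowded p), isolated_of_open with U; [exact HU | exact Up |].
    intros y Uy; apply Hp; left; exact Uy.
  - apply (Hcrowded p), isolated_of_open with V; [exact HV | exact Vp |].
    intros q Vq. apply NNPP; intro Hqp.
    destruct (HT1 q p Hqp) as [W [HW [Wq nWp]]].
    destruct (HD (fun y => V y /\ W y) (open_setI V W HV HW) q (conj Vq Wq))
      as [r [[Vr Wr] Dr]].
    assert (Hr : r = p) by (apply Hp; right; split; assumption).
    subst r; contradiction.
Qed.

End Adjoin.

Lemma dense_open (D : T -> Prop) :
  T1_top O -> maximal_space O -> dense O D -> O D.
Proof.
  intros HT1 [_ [Hcrowded Hmax]] HD. apply NNPP; intro nD.
  destruct (Hmax (adjoin_open O D) (adjoin_open_topology D)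
                 (adjoin_open_strictly_finer D nD)) as [p Hp].
  exact (adjoin_open_dense_in_itself D HT1 Hcrowded HD p Hp).
Qed.

Section Kernel.

Variable A : T -> Prop.

Lemma crowded_kernel_sub (y : T) : crowded_kernel O A y -> A y.
Proof. intros [C [CA [_ Cy]]]; exact (CA y Cy). Qed.

Lemma crowded_kernel_no_isolated : no_isolated_in_subspace O (crowded_kernel O A).
Proof.
  intros b [C [CA [HC Cb]]] U HU Ub.
  destruct (HC b Cb U HU Ub) as [c [Cc [Uc Hcb]]].
  exists c; split; [exists C; auto | auto].
Qed.

Lemma dense_crowded_kernel :
  dense_in_itself O -> dense O (fun y => ~ A y \/ crowded_kernel O A y).
Proof.
  intros Hcrowded U HU u Uu. apply NNPP; intro Hnone.
  assert (HUA : forall y, U y -> A y).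
  { intros y Uy; apply NNPP; intro nAy; apply Hnone; exists y; auto. }
  apply Hnone; exists u; split; [exact Uu|].
  right; exists U; split; [exact HUA|].
  split; [apply open_no_isolated_in_subspace; assumption | exact Uu].
Qed.

End Kernel.

End Topology.

Theorem mainTheorem11 (T : Type) (O : (T -> Prop) -> Prop)
  (Hcount : countable_type T) (HT1 : T1_top O) (Hmax : maximal_space O)
  (A : T -> Prop) (x : T) :
  closure O A x -> ~ A x ->
  exists B : T -> Prop,
    (forall y, B y -> A y) /\ no_isolated_in_subspace O B /\ closure O B x.
Proof.
  intros Hcl nAx.
  pose proof Hmax as [HO [Hcrowded _]].
  set (D := fun y => ~ A y \/ crowded_kernel O A y).
  assert (HD : O D) by (apply dense_open; auto; apply dense_crowded_kernel; auto).
  exists (crowded_kernel O A).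
  split; [apply crowded_kernel_sub|].
  split; [apply crowded_kernel_no_isolated|].
  intros U HU Ux.
  destruct (Hcl (fun y => U y /\ D y)) as [y [[Uy [nAy | Ky]] Ay]].
  - apply open_setI; assumption.
  - split; [exact Ux | left; exact nAx].
  - contradiction.
  - exists y; split; assumption.
Qed.
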